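(* Let $\varepsilon>0$ be a real and $\ell\geq2$ an integer. There exists $t_0$ such that for every integer $t\geq t_0$ there is a constant $c>0$ such that for all positive integers $m\leq n$: if $\ell$ is odd then $z(m,n,\theta_{t,\ell})\geq c\, m^{\frac{\ell+1}{2\ell}-\varepsilon} n^{\frac{\ell+1}{2\ell}-\varepsilon}$, and if $\ell$ is even then $z(m,n,\theta_{t,\ell})\geq c\, m^{\frac12+\frac1\ell-\varepsilon} n^{\frac12-\varepsilon}$.
   Context: For integers $t,\ell\geq2$, the theta graph $\theta_{t,\ell}$ consists of $t$ internally vertex-disjoint paths of length $\ell$ between two fixed vertices. $z(m,n,F)$ is the maximum number of edges in a bipartite graph with parts of sizes $m$ and $n$ containing no copy of $F$ as a subgraph. *)

From Stdlib Require Import Reals.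
From mathcomp Require Import all_boot.

Set Implicit Arguments.
Unset Strict Implicit.
Unset Printing Implicit Defensive.

Definition bip_adj (m n : nat) (E : {set 'I_m * 'I_n})
    (u v : 'I_m + 'I_n) : bool :=
  match u, v with
  | inl a, inr b => (a, b) \in E
  | inr b, inl a => (a, b) \in E
  | _, _ => false
  end.

(* The theta graph theta_{t,l}: vertices are labelled (i, j) with i < t the
   index of the path and j <= l the position on it; all paths share the
   endpoint x = (i,0) and y = (i,l).  A copy of theta_{t,l} in the graph is an
   injective edge-preserving map of the vertices of theta_{t,l}, encoded by
   g : 'I_t -> 'I_l.+1 -> V such that
   - all paths start at the same vertex and end at the same vertex,
   - consecutive vertices on each path are adjacent,
   - g (i,j) = g (i',j') only when (i,j),(i',j') are the same vertex of
     theta_{t,l}, i.e. j = j' and (i = i' or j is an endpoint index). *)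
Definition is_theta_copy (m n t l : nat) (E : {set 'I_m * 'I_n})
    (g : {ffun 'I_t -> {ffun 'I_l.+1 -> 'I_m + 'I_n}}) : bool :=
  [&& [forall i : 'I_t, forall i' : 'I_t,
         (g i ord0 == g i' ord0) && (g i ord_max == g i' ord_max)],
      [forall i : 'I_t, forall j : 'I_l.+1, forall j' : 'I_l.+1,
         ((val j').+1 == val j) ==> bip_adj E (g i j') (g i j)] &
      [forall i : 'I_t, forall i' : 'I_t, forall j : 'I_l.+1, forall j' : 'I_l.+1,
         (g i j == g i' j') ==>
         ((j == j') && [|| i == i', val j == 0 | val j == l])]].

Definition has_theta (m n t l : nat) (E : {set 'I_m * 'I_n}) : bool :=
  [exists g : {ffun 'I_t -> {ffun 'I_l.+1 -> 'I_m + 'I_n}},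
     is_theta_copy E g].

Definition z_theta (m n t l : nat) : nat :=
  \max_(E : {set 'I_m * 'I_n} | ~~ has_theta t l E) #|E|.

From Stdlib Require Import Reals Lra ZArith Lia.
From mathcomp Require Import all_boot zify.
Set Implicit Arguments.
Unset Strict Implicit.
Unset Printing Implicit Defensive.

(* Theorem 9: lower bounds for z(m, n, theta_{t,l}) by the deletion method,
   carried out by counting edge sets instead of by probability.

   Let N = m n, s = t l and B = n^{floor(l/2)} m^{floor((l-1)/2)}.
   - Deletion: removing one edge of every theta-copy of an edge set E leaves
     a theta-free graph, so  #|E| - #copies(E) <= z.
   - A copy is fixed by its two branch vertices and t paths whose interior
     vertices alternate between the two sides; hence K_{m,n} contains at most
     G <= (m+n)^2 B^t copies, and each copy uses exactly s distinct edges.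
   - Averaging over the k-subsets of the N possible edges: a fixed copy lies
     in at most C(N,k) (k/N)^s of them, so some k-set E has at most
     G (k/N)^s copies.  If 2 (m+n)^2 B^t k^{s-1} <= N^s this is <= k/2, and
     deletion gives  k <= 2 z.
   - Choosing k as the integer part of the real solution x of
     8 n^2 B^t x^{s-1} = N^s  gives  z >= m^a n^b / 32  for all exponents
     a, b <= 1 obeying two linear inequalities; the exponents of the theorem
     obey them once t > 2 / eps. *)

Lemma card_bigcup_le (I T : finType) (P : pred I) (F : I -> {set T}) :
  #|\bigcup_(i | P i) F i| <= \sum_(i | P i) #|F i|.
Proof.
apply: (big_ind2 (fun (A : {set T}) k => #|A| <= k)) => //.
- by rewrite cards0.
- move=> A1 n1 A2 n2 h1 h2; rewrite cardsU.
  by apply: leq_trans (leq_subr _ _) _; apply: leq_add.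
Qed.

Lemma leq_expn2r a b e : a <= b -> a ^ e <= b ^ e.
Proof. by case: e => [|e] // hab; rewrite leq_exp2r. Qed.

Section BipartiteEdges.
Variables m n : nat.
Local Notation V := ('I_m + 'I_n)%type.
Local Notation T := ('I_m * 'I_n)%type.

Definition edge_set (u v : V) : {set T} :=
  match u, v with
  | inl a, inr b => [set (a, b)]
  | inr b, inl a => [set (a, b)]
  | _, _ => set0
  end.

Lemma card_edge_set u v : #|edge_set u v| <= 1.
Proof. by case: u; case: v => * //=; rewrite ?cards1 ?cards0. Qed.

Lemma bip_adj_edge_set (E : {set T}) u v :
  bip_adj E u v -> exists2 e, e \in E & edge_set u v = [set e].
Proof. by case: u; case: v => //= a b H; [exists (b, a) | exists (a, b)]. Qed.

Lemma edge_set_bip_adj (E : {set T}) u v e :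
  edge_set u v = [set e] -> e \in E -> bip_adj E u v.
Proof.
case: u => [a|b]; case: v => [a'|b'] /= H;
  try by move/setP/(_ e): H; rewrite !inE eqxx.
- by move/setP/(_ (a, b')): H; rewrite !inE eqxx => /esym/eqP <-.
- by move/setP/(_ (a', b)): H; rewrite !inE eqxx => /esym/eqP <-.
Qed.

Lemma edge_set_sub (E : {set T}) u v : bip_adj E u v -> edge_set u v \subset E.
Proof. by case/bip_adj_edge_set => e eE ->; rewrite sub1set. Qed.

Lemma bip_adj_mono (E F : {set T}) u v :
  E \subset F -> bip_adj E u v -> bip_adj F u v.
Proof. by move=> /subsetP sEF; case: u; case: v => //= a b /sEF. Qed.

Lemma edge_set_common (u v u' v' : V) e :
  e \in edge_set u v -> e \in edge_set u' v' ->
  (u = u' /\ v = v') \/ (u = v' /\ v = u').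
Proof.
case: u => [a|b]; case: v => [a1|b1]; case: u' => [a2|b2]; case: v' => [a3|b3];
  rewrite /= ?inE //; move=> /eqP h1 /eqP h2; rewrite h2 in h1; case: h1 => *;
  subst; by [left | right].
Qed.

Lemma bip_adj1_back (e : T) (u v w : V) :
  bip_adj [set e] u v -> bip_adj [set e] v w -> u = w.
Proof.
case: u => [a|b]; case: v => [a'|b']; case: w => [a''|b''] //=; rewrite !inE.
all: by move=> /eqP h1 /eqP h2; rewrite -h2 in h1; case: h1 => *; subst.
Qed.

Definition is_left (v : V) : bool := if v is inl _ then true else false.

Lemma bip_adj_sides (E : {set T}) u v : bip_adj E u v -> is_left u = ~~ is_left v.
Proof. by case: u; case: v. Qed.

Definition left_side : {set V} := [set v | is_left v].
Definition right_side : {set V} := [set v | ~~ is_left v].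

Lemma card_left_side : #|left_side| = m.
Proof.
have -> : left_side = inl @: [set: 'I_m].
  apply/setP => v; rewrite inE; apply/idP/imsetP; last by case=> a _ ->.
  by case: v => // a _; exists a.
by rewrite card_imset ?cardsT ?card_ord // => a b [].
Qed.

Lemma card_right_side : #|right_side| = n.
Proof.
have -> : right_side = inr @: [set: 'I_n].
  apply/setP => v; rewrite inE; apply/idP/imsetP; last by case=> b _ ->.
  by case: v => // b _; exists b.
by rewrite card_imset ?cardsT ?card_ord // => a b [].
Qed.

End BipartiteEdges.

Section ThetaCopies.
Variables m n t l : nat.
Local Notation V := ('I_m + 'I_n)%type.
Local Notation T := ('I_m * 'I_n)%type.
Local Notation GT := {ffun 'I_t -> {ffun 'I_l.+1 -> V}}.

Lemma theta_copy_mono (E F : {set T}) (g : GT) :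
  E \subset F -> is_theta_copy E g -> is_theta_copy F g.
Proof.
move=> sEF /and3P[h1 /forallP h2 h3]; apply/and3P; split=> //.
apply/forallP=> i; apply/forallP=> j; apply/forallP=> j'; apply/implyP=> hj.
have /forallP/(_ j)/forallP/(_ j')/implyP/(_ hj) := h2 i.
exact: bip_adj_mono.
Qed.

Definition copies (E : {set T}) : {set GT} := [set g | is_theta_copy E g].

Definition pos (j : 'I_l) : 'I_l.+1 := widen_ord (leqnSn l) j.
Definition next_pos (j : 'I_l) : 'I_l.+1 := lift ord0 j.

Lemma next_posE j : val (next_pos j) = j.+1.
Proof. by rewrite /= /bump add1n. Qed.

Definition path_edges (g : GT) : {set T} :=
  \bigcup_(p : 'I_t * 'I_l) edge_set (g p.1 (pos p.2)) (g p.1 (next_pos p.2)).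

Lemma copiesE (E : {set T}) :
  copies E = [set g in copies setT | path_edges g \subset E].
Proof.
apply/setP => g; rewrite !inE; apply/idP/andP.
  move=> H; split; first exact: theta_copy_mono (subsetT E) H.
  apply/bigcupsP => -[i j] _ /=; apply: edge_set_sub.
  case/and3P: H => _ /forallP /(_ i) /forallP /(_ (next_pos j)) /forallP.
  by move=> /(_ (pos j)) /implyP adj _; apply: adj; rewrite next_posE.
move=> [/and3P[h1 /forallP h2 h3] hS]; apply/and3P; split=> //.
apply/forallP=> i; apply/forallP=> j; apply/forallP=> j'; apply/implyP=> /eqP hj.
have /forallP /(_ j) /forallP /(_ j') /implyP := h2 i.
rewrite hj eqxx => /(_ isT) /bip_adj_edge_set [e _ hep].
have jl : j' < l by move: (ltn_ord j); rewrite -hj ltnS.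
have ej : e \in path_edges g.
  apply/bigcupP; exists (i, Ordinal jl) => //=.
  have -> : pos (Ordinal jl) = j' by apply: val_inj.
  have -> : next_pos (Ordinal jl) = j by apply: val_inj; rewrite next_posE.
  by rewrite hep set11.
by apply: (edge_set_bip_adj hep); apply: (subsetP hS).
Qed.

Hypotheses (ht : 0 < t) (hl : 1 < l).

(* The first path and the first interior position, whose edge is deleted. *)
Definition path0 : 'I_t := Ordinal ht.
Definition pos1 : 'I_l.+1 := @Ordinal l.+1 1 (ltnW hl).

(* Deletion: removing the first edge of every copy leaves a theta-free graph. *)
Lemma deletion (E : {set T}) : #|E| - #|copies E| <= z_theta m n t l.
Proof.
set R := \bigcup_(g in copies E) edge_set (g path0 ord0) (g path0 pos1).
have cR : #|R| <= #|copies E|.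
  apply: leq_trans (card_bigcup_le _ _) _.
  by rewrite -sum1_card; apply: leq_sum => g _; apply: card_edge_set.
have cE : #|E| - #|copies E| <= #|E :\: R|.
  rewrite cardsD; apply: leq_sub2l; apply: leq_trans cR.
  by apply/subset_leq_card/subsetIr.
apply: leq_trans cE _.
apply: (@leq_bigmax_cond _ (fun E0 : {set T} => ~~ has_theta t l E0) (fun E0 => #|E0|)).
apply/existsP => -[g Hg].
have HgE := theta_copy_mono (subsetDl E R) Hg.
case/and3P: Hg => _ /forallP /(_ path0) /forallP /(_ pos1) /forallP /(_ ord0) H _.
have [e eER hep] := bip_adj_edge_set (implyP H isT).
have eR : e \in R by apply/bigcupP; exists g; rewrite ?inE // hep set11.
by move: eER; rewrite inE eR.
Qed.

Lemma card_path_edges (g : GT) : g \in copies setT -> t * l <= #|path_edges g|.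
Proof.
rewrite inE => /and3P[_ /forallP h2 /forallP h3].
pose F (p : 'I_t * 'I_l) := edge_set (g p.1 (pos p.2)) (g p.1 (next_pos p.2)).
have adj p : bip_adj setT (g p.1 (pos p.2)) (g p.1 (next_pos p.2)).
  have /forallP /(_ (next_pos p.2)) /forallP /(_ (pos p.2)) /implyP := h2 p.1.
  by apply; rewrite next_posE.
have inj i1 i2 j1 j2 : g i1 j1 = g i2 j2 ->
    (j1 == j2) && [|| i1 == i2, nat_of_ord j1 == 0 | nat_of_ord j1 == l].
  move=> /eqP; have /forallP /(_ i2) /forallP /(_ j1) /forallP /(_ j2) := h3 i1.
  by move/implyP.
have disj p q e : e \in F p -> e \in F q -> p = q.
  case: p q => [i j] [i' j']; rewrite /F /= => he1 he2.
  case: (edge_set_common he1 he2) => -[hu hv].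
  - move: (inj _ _ _ _ hu) (inj _ _ _ _ hv) => /andP[/eqP hj o1] /andP[_ o2].
    have jj : j = j' by apply: val_inj; move: hj => /(congr1 val).
    subst j'; have := ltn_ord j.
    case/or3P: o1 => [/eqP -> // | /eqP k1 | /eqP k1];
    case/or3P: o2 => [/eqP -> // | /eqP k2 | /eqP k2]; move: k1 k2;
    rewrite next_posE /=; lia.
  - move: (inj _ _ _ _ hu) (inj _ _ _ _ hv) => /andP[/eqP hj _] /andP[/eqP hj' _].
    move: hj hj' => /(congr1 val) + /(congr1 val).
    by rewrite !next_posE /=; lia.
have pick p : {e | e \in F p}.
  apply: sigW; rewrite /F; have [e _ ->] := bip_adj_edge_set (adj p).
  by exists e; rewrite set11.
pose f p := sval (pick p).
have fF p : f p \in F p := svalP (pick p).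
have finj : injective f by move=> p q hpq; apply: (disj p q (f p)); rewrite // hpq.
have -> : t * l = #|f @: [set: 'I_t * 'I_l]|.
  by rewrite card_imset // cardsT card_prod !card_ord.
apply/subset_leq_card/subsetP => e /imsetP [p _ ->].
by apply/bigcupP; exists p.
Qed.

End ThetaCopies.

(* The graph with a single edge contains no theta graph, so z >= 1. *)
Lemma z_theta_ge1 (m n t l : nat) :
  0 < m -> 0 < n -> 0 < t -> 1 < l -> 1 <= z_theta m n t l.
Proof.
move=> hm hn ht hl.
pose e := (Ordinal hm, Ordinal hn).
rewrite -(cards1 e).
apply: (@leq_bigmax_cond _ (fun E : {set _} => ~~ has_theta t l E) (fun E => #|E|)).
apply/existsP => -[g /and3P[_ /forallP h2 /forallP h3]].
pose p0 := path0 ht; pose p1 := pos1 hl; pose p2 : 'I_l.+1 := @Ordinal l.+1 2 hl.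
have /forallP /(_ p1) /forallP /(_ ord0) /implyP /(_ isT) adj01 := h2 p0.
have /forallP /(_ p2) /forallP /(_ p1) /implyP /(_ isT) adj12 := h2 p0.
have /forallP /(_ p0) /forallP /(_ ord0) /forallP /(_ p2) /implyP := h3 p0.
by move=> /(_ (introT eqP (bip_adj1_back adj01 adj12))) /andP[].
Qed.

Lemma prod_alternating (s : bool) (m n L : nat) :
  \prod_(1 <= k < L.+1) (if s (+) odd k then m else n) =
  (if s then n ^ uphalf L * m ^ L./2 else m ^ uphalf L * n ^ L./2).
Proof.
elim: L => [|L IH]; first by rewrite big_geq //; case: s.
rewrite big_nat_recr //= IH uphalf_half.
move: (L./2) => h; case: s {IH}; case: (odd L) => /=;
  by rewrite ?add0n ?add1n !expnS ?mulnE; ring.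
Qed.

Section CountCopies.
Variables m n t l : nat.
Local Notation V := ('I_m + 'I_n)%type.
Local Notation T := ('I_m * 'I_n)%type.
Local Notation GT := {ffun 'I_t -> {ffun 'I_l.+1 -> V}}.

Lemma copy_sides (g : GT) : g \in copies t l setT ->
  forall i (j : 'I_l.+1), is_left (g i j) = is_left (g i ord0) (+) odd j.
Proof.
rewrite inE => /and3P[_ /forallP h2 _] i j.
suff H k : k <= l -> is_left (g i (inord k)) = is_left (g i ord0) (+) odd k.
  by rewrite -H ?inord_val // -ltnS.
elim: k => [_|k IH hk].
  by rewrite addbF; congr (is_left (g i _)); apply: val_inj; rewrite /= inordK.
have step : (val (@inord l k)).+1 == val (@inord l k.+1).
  apply/eqP; change ((nat_of_ord (@inord l k)).+1 = nat_of_ord (@inord l k.+1)).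
  by rewrite !inordK // ltnS // ltnW.
have /forallP /(_ (inord k.+1)) /forallP /(_ (inord k)) /implyP := h2 i.
move=> /(_ step) /bip_adj_sides hside.
by rewrite -[is_left (g i (inord k.+1))]negbK -hside IH ?(ltnW hk) //= addbN.
Qed.

Definition slots (x y : V) (j : 'I_l.+1) : {set V} :=
  if val j == 0 then [set x] else if val j == l then [set y]
  else if is_left x (+) odd j then left_side m n else right_side m n.

Hypotheses (ht : 0 < t) (hl : 1 < l) (hmn : m <= n).

Lemma prod_card_slots x y :
  \prod_(j : 'I_l.+1) #|slots x y j| <= n ^ l./2 * m ^ (l.-1)./2.
Proof.
pose D k := if (k == 0) || (k == l) then 1 else if is_left x (+) odd k then m else n.
rewrite (eq_bigr (fun j : 'I_l.+1 => D j)); last first.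
  move=> j _; rewrite /slots /D; case: eqP => _; first by rewrite cards1.
  case: eqP => _; first by rewrite cards1.
  by case: ifP; rewrite ?card_left_side ?card_right_side.
rewrite -(big_mkord xpredT D) big_nat_recr //= big_ltn ?(ltnW hl) //.
rewrite {1}/D eqxx {2}/D eqxx orbT mul1n muln1.
have -> : \prod_(1 <= k < l) D k =
          \prod_(1 <= k < (l.-1).+1) (if is_left x (+) odd k then m else n).
  rewrite prednK ?(ltnW hl) //; apply: eq_big_nat => k /andP[k1 kl].
  by rewrite /D (_ : (k == 0) || (k == l) = false) //; apply/negP; lia.
have hhalf : (l.-1)./2 <= l./2.
  by rewrite -{2}(prednK (ltnW hl)) /= uphalf_half leq_addl.
rewrite prod_alternating uphalfE prednK ?(ltnW hl) //; case: (is_left x) => //.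
rewrite -[in X in _ <= X](subnK hhalf) -[in X in X <= _](subnK hhalf).
rewrite !expnD mulnC mulnA leq_mul2r mulnC leq_mul ?leq_expn2r //.
by rewrite orbT.
Qed.

(* A copy is determined by its endpoints and t choices of a path. *)
Lemma card_copies_complete :
  #|copies t l [set: T]| <= (m + n) ^ 2 * (n ^ l./2 * m ^ (l.-1)./2) ^ t.
Proof.
set B := n ^ l./2 * m ^ (l.-1)./2.
pose Fam (xy : V * V) := [set g : GT | [forall i, g i \in family (slots xy.1 xy.2)]].
have sub : copies t l [set: T] \subset \bigcup_(xy : V * V) Fam xy.
  apply/subsetP => g hg; apply/bigcupP.
  exists (g (path0 ht) ord0, g (path0 ht) ord_max) => //.
  have := hg; rewrite inE => /and3P[/forallP ends _ _].
  rewrite inE; apply/forallP => i; apply/familyP => j; rewrite /slots /=.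
  have /forallP /(_ (path0 ht)) /andP[/eqP e0 /eqP el] := ends i.
  case: ifP => [/eqP j0 | _].
    by rewrite (_ : j = ord0) ?e0 ?inE //; apply: val_inj.
  case: ifP => [/eqP jl | _].
    by rewrite (_ : j = ord_max) ?el ?inE //; apply: val_inj.
  rewrite -e0 -(copy_sides hg).
  by case: (g i j) => a; rewrite /= inE.
apply: leq_trans (subset_leq_card sub) _.
apply: leq_trans (card_bigcup_le _ _) _.
have cF xy : #|Fam xy| <= B ^ t.
  have -> : #|Fam xy| = #|ffun_on_mem 'I_t (mem (family (slots xy.1 xy.2)))|.
    by apply: eq_card => g; rewrite inE; apply/forallP/ffun_onP.
  rewrite card_ffun_on card_ord; apply: leq_expn2r.
  by rewrite card_family foldrE big_map big_enum; apply: prod_card_slots.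
apply: (@leq_trans (\sum_(xy : V * V) B ^ t)); first exact: leq_sum.
by rewrite sum_nat_const card_prod card_sum !card_ord.
Qed.

End CountCopies.

(* C(N-s, k-s) N^s <= C(N, k) k^s: a fixed s-set lies in at most a fraction
   (k/N)^s of the k-subsets of an N-set. *)
Lemma bin_shift_bound N k s :
  s <= k -> k <= N -> 'C(N - s, k - s) * N ^ s <= 'C(N, k) * k ^ s.
Proof.
move=> + kN; elim: s => [|s IH] hs; first by rewrite !subn0 !expn0.
have {}IH := IH (ltnW hs).
have step : (N - s) * 'C(N - s.+1, k - s.+1) = (k - s) * 'C(N - s, k - s).
  have := mul_bin_diag (N - s) (k - s.+1).
  have -> : (N - s).-1 = N - s.+1 by lia.
  by have -> : (k - s.+1).+1 = k - s by lia.
rewrite -(@leq_pmul2l (N - s)); last lia.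
set A := 'C(N - s.+1, k - s.+1); set B := 'C(N - s, k - s); set C := 'C(N, k).
have e1 : (N - s) * (A * N ^ s.+1) = N * (k - s) * (B * N ^ s).
  by rewrite expnS mulnA step; lia.
have e2 : (N - s) * (C * k ^ s.+1) = (N - s) * k * (C * k ^ s).
  by rewrite expnS; lia.
by rewrite e1 e2 leq_mul //; nia.
Qed.

(* The k-sets containing a fixed set S are the k-sets S :|: D, D disjoint
   from S. *)
Lemma card_supersets (T : finType) (S : {set T}) k : #|S| <= k ->
  #|[set E : {set T} | #|E| == k & S \subset E]| <= 'C(#|T| - #|S|, k - #|S|).
Proof.
move=> hS.
set P := [set E : {set T} | #|E| == k & S \subset E].
rewrite (cardsCs S) subKn; last by rewrite -(cardsC S) leq_addl.
rewrite -cards_draws.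
have inj : {in P &, injective (fun E => E :\: S)}.
  move=> E1 E2; rewrite !inE => /andP[_ s1] /andP[_ s2] h.
  by rewrite -(setID E1 S) -(setID E2 S) h (setIidPr s1) (setIidPr s2).
rewrite -(card_in_imset inj); apply: subset_leq_card.
apply/subsetP => D /imsetP [E]; rewrite /P inE => /andP[/eqP hE sE] ->.
by rewrite inE subsetDr /= cardsD (setIidPr sE) hE -(cardsCs S) eqxx.
Qed.

Lemma exists_le_average (I : finType) (D : {set I}) (f : I -> nat) X :
  0 < #|D| -> \sum_(E in D) f E <= X * #|D| -> exists2 E, E \in D & f E <= X.
Proof.
move=> hD hs; case: (pickP [pred E in D | f E <= X]) => [E /andP[h1 h2] | H].
  by exists E.
have : \sum_(E in D) X.+1 <= \sum_(E in D) f E.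
  apply: leq_sum => E ED; have := H E; rewrite /= ED /= => /negbT.
  by rewrite -ltnNge.
by rewrite sum_nat_const => h; have := leq_trans h hs; nia.
Qed.

Lemma card_set_cond (I : finType) (A : {set I}) (P : pred I) :
  #|[set x in A | P x]| = \sum_(x in A) P x.
Proof.
rewrite -sum1_card big_mkcond /= [RHS]big_mkcond /=; apply: eq_bigr => x _.
by rewrite inE; case: (x \in A); case: (P x).
Qed.

Section KSubsets.
Variables m n t l k : nat.
Local Notation T := ('I_m * 'I_n)%type.
Hypotheses (ht : 0 < t) (hl : 1 < l) (hk : k <= m * n).

Lemma ksets_containing_copy g : g \in copies t l [set: T] ->
  #|[set E : {set T} | #|E| == k & path_edges g \subset E]| * (m * n) ^ (t * l)
    <= 'C(m * n, k) * k ^ (t * l).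
Proof.
move=> hg; have hs := card_path_edges ht hl hg.
set S := path_edges g in hs *; set c := #|_|.
have cardT : #|{: T}| = m * n by rewrite card_prod !card_ord.
have [hSk | hkS] := leqP #|S| k; last first.
  suff -> : c = 0 by [].
  apply/eqP; rewrite cards_eq0; apply/eqP/setP => E; rewrite !inE.
  by apply/negbTE/andP => -[/eqP hE /subset_leq_card]; lia.
have hc : c * (m * n) ^ #|S| <= 'C(m * n, k) * k ^ #|S|.
  apply: leq_trans (bin_shift_bound hSk hk); rewrite leq_mul2r.
  by have := card_supersets hSk; rewrite cardT => ->; rewrite orbT.
rewrite -(subnKC hs) !expnD in hc.
have hNpos : 0 < (m * n) ^ (#|S| - t * l).
  have : 0 < t * l by rewrite muln_gt0 ht ltnW.
  by rewrite expn_gt0; lia.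
rewrite -(leq_pmul2r hNpos); apply: leq_trans; first by rewrite -mulnA; exact: hc.
by rewrite -!mulnA !leq_mul2l leq_expn2r ?orbT.
Qed.

Lemma kset_with_few_copies : exists2 E : {set T}, #|E| = k &
  #|copies t l E| * (m * n) ^ (t * l) <= #|copies t l [set: T]| * k ^ (t * l).
Proof.
pose D := [set E : {set T} | #|E| == k].
have cD : #|D| = 'C(m * n, k) by rewrite card_draws card_prod !card_ord.
have sum : \sum_(E in D) (#|copies t l E| * (m * n) ^ (t * l))
    <= (#|copies t l [set: T]| * k ^ (t * l)) * #|D|.
  under eq_bigr => E _ do rewrite copiesE card_set_cond big_distrl /=.
  rewrite exchange_big /= -mulnA -sum_nat_const cD.
  apply: leq_sum => g hg; rewrite -big_distrl /= -card_set_cond [k ^ _ * _]mulnC.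
  apply: leq_trans _ (ksets_containing_copy hg); rewrite leq_mul2r.
  by apply/orP; right; apply/subset_leq_card/subsetP => E; rewrite !inE.
have hD : 0 < #|D| by rewrite cD bin_gt0.
have [E] := exists_le_average hD sum.
by rewrite inE => /eqP; exists E.
Qed.

End KSubsets.

(* The counting core: if 2 (m+n)^2 B^t k^{tl-1} <= N^{tl}, some k-edge graph
   has at most k/2 copies, and deleting one edge per copy leaves >= k/2 edges. *)
Lemma k_le_twice_z (m n t l k : nat) :
  0 < m -> 0 < t -> 1 < l -> m <= n -> k <= m * n ->
  2 * ((m + n) ^ 2 * (n ^ l./2 * m ^ (l.-1)./2) ^ t) * k ^ (t * l).-1
    <= (m * n) ^ (t * l) ->
  k <= 2 * z_theta m n t l.
Proof.
move=> hm ht hl hmn hk hcond.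
have [E hE hfew] := kset_with_few_copies ht hl hk.
have hG := card_copies_complete ht hl hmn.
set s := t * l in hcond hfew; set Bd := (m + n) ^ 2 * _ in hG hcond.
have hs : 0 < s by rewrite muln_gt0 ht ltnW.
have hNs : 0 < (m * n) ^ s by rewrite expn_gt0 muln_gt0 hm (leq_trans hm hmn).
have few : 2 * #|copies t l E| <= k.
  rewrite -(leq_pmul2r hNs); apply: (@leq_trans (2 * Bd * k ^ s.-1 * k)).
    rewrite -mulnA -(mulnA (2 * Bd)) -(mulnA 2 Bd) leq_mul2l /= -expnSr prednK //.
    by apply: leq_trans hfew _; rewrite leq_mul2r hG orbT.
  by rewrite [k * _]mulnC leq_mul2r hcond orbT.
have := deletion ht hl E; rewrite hE => del.
by clear -few del; lia.
Qed.

Local Open Scope R_scope.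

Lemma INR_muln a b : INR (a * b)%N = INR a * INR b.
Proof. by rewrite mulnE mult_INR. Qed.

Lemma INR_addn a b : INR (a + b)%N = INR a + INR b.
Proof. by rewrite addnE plus_INR. Qed.

Lemma INR_expn a k : INR (a ^ k)%N = INR a ^ k.
Proof. by elim: k => [|k IH] //=; rewrite expnS INR_muln IH. Qed.

Lemma INR_pred k : (0 < k)%N -> INR k.-1 = INR k - 1.
Proof. by case: k => // k _; rewrite S_INR /=; lra. Qed.

Lemma leR_INR a b : INR a <= INR b -> (a <= b)%N.
Proof. by move=> h; apply/leP; apply: INR_le. Qed.

Lemma INR_leR a b : (a <= b)%N -> INR a <= INR b.
Proof. by move=> /leP h; apply: le_INR. Qed.

Lemma pow_exp y k : exp y ^ k = exp (INR k * y).
Proof.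
elim: k => [|k IH]; first by rewrite /= Rmult_0_l exp_0.
by rewrite S_INR [exp y ^ k.+1]/= IH -exp_plus; congr exp; ring.
Qed.

Lemma exp_le x y : x <= y -> exp x <= exp y.
Proof.
by case/Rle_lt_or_eq_dec => [/exp_increasing /Rlt_le | ->] //; apply: Rle_refl.
Qed.

Lemma ln_ge0 y : 1 <= y -> 0 <= ln y.
Proof.
case/Rle_lt_or_eq_dec => [hy | <-]; last by rewrite ln_1; apply: Rle_refl.
by rewrite -ln_1; left; apply: ln_increasing; lra.
Qed.

Lemma nat_floor x : 0 <= x -> exists k : nat, INR k <= x < INR k + 1.
Proof.
move=> hx; have [h1 h2] := archimed x.
have hu : (0 < up x)%Z by apply: lt_IZR; lra.
exists (Z.to_nat (up x - 1)).
by rewrite INR_IZR_INZ Z2Nat.id ?minus_IZR; lra || lia.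
Qed.

(* Real form of the counting core: for every real x >= 0 satisfying the
   condition, min(x, mn) <= 4 z (take k = floor (min x (mn))). *)
Lemma z_theta_ge_min (m n t l : nat) (x : R) :
  (0 < m)%N -> (0 < t)%N -> (1 < l)%N -> (m <= n)%N -> 0 <= x ->
  2 * (2 * INR n) ^ 2 * (INR n ^ (l./2) * INR m ^ ((l.-1)./2)) ^ t
    * x ^ ((t * l).-1) <= (INR m * INR n) ^ (t * l) ->
  Rmin x (INR m * INR n) <= 4 * INR (z_theta m n t l).
Proof.
move=> hm ht hl hmn hx hc.
have mR : 1 <= INR m by apply: (INR_leR hm).
have mnR : INR m <= INR n by apply: INR_leR.
have hmin0 : 0 <= Rmin x (INR m * INR n) by apply: Rmin_glb; nra.
have [k [hk1 hk2]] := nat_floor hmin0.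
have hkx : INR k <= x := Rle_trans _ _ _ hk1 (Rmin_l _ _).
have hkN : (k <= m * n)%N.
  by apply: leR_INR; rewrite INR_muln; apply: Rle_trans hk1 (Rmin_r _ _).
case: (posnP k) => [k0 | kpos].
  have := INR_leR (z_theta_ge1 hm (leq_trans hm hmn) ht hl).
  by move: hk2; rewrite k0 /=; lra.
have hcore : (2 * ((m + n) ^ 2 * (n ^ l./2 * m ^ (l.-1)./2) ^ t) * k ^ (t * l).-1
    <= (m * n) ^ (t * l))%N.
  apply: leR_INR; rewrite !INR_muln !INR_expn !INR_muln !INR_expn INR_addn.
  apply: Rle_trans hc; rewrite -[INR 2]/2.
  have p1 : (INR m + INR n) ^ 2 <= (2 * INR n) ^ 2 by apply: pow_incr; lra.
  have p2 : INR k ^ (t * l).-1 <= x ^ (t * l).-1 by apply: pow_incr; split => //; apply: pos_INR.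
  have p3 : 0 <= (INR n ^ l./2 * INR m ^ (l.-1)./2) ^ t.
    by apply/pow_le/Rmult_le_pos; apply: pow_le; lra.
  have p4 : 0 <= INR k ^ (t * l).-1 by apply/pow_le/pos_INR.
  have p5 : 0 <= (INR m + INR n) ^ 2 by apply: pow_le; lra.
  apply: Rmult_le_compat; try apply: Rmult_le_pos; try apply: Rmult_le_pos; try lra.
  by rewrite -Rmult_assoc; apply: Rmult_le_compat_r => //; lra.
have := INR_leR (k_le_twice_z hm ht hl hmn hkN hcore).
rewrite INR_muln; change (INR 2) with 2 => hz.
have : INR 1 <= INR k := INR_leR kpos.
by change (INR 1) with 1; lra.
Qed.

(* z >= m^al n^be / 32 whenever al, be <= 1 satisfy two linear inequalities:
   apply the previous lemma to the exact solution x of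
   8 n^2 (n^{floor(l/2)} m^{floor((l-1)/2)})^t x^{tl-1} = (mn)^{tl}. *)
Lemma z_theta_power_lower (m n t l : nat) (al be : R) :
  (0 < m)%N -> (m <= n)%N -> (0 < t)%N -> (1 < l)%N -> al <= 1 -> be <= 1 ->
  al * (INR t * INR l - 1) <= INR t * INR l - INR t * INR ((l.-1)./2) ->
  be * (INR t * INR l - 1) <= INR t * INR l - INR t * INR (l./2) - 2 ->
  / 32 * Rpower (INR m) al * Rpower (INR n) be <= INR (z_theta m n t l).
Proof.
move=> hm hmn ht hl al1 be1 hal hbe.
have mR : 1 <= INR m by apply: (INR_leR hm).
have nR : 1 <= INR n by apply: Rle_trans mR (INR_leR hmn).
have sR : 2 <= INR t * INR l.
  have t1 : 1 <= INR t := INR_leR ht; have l2 : 2 <= INR l := INR_leR hl.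
  nra.
set a := ln (INR m); set b := ln (INR n); set s := INR t * INR l in hal hbe sR.
have a0 : 0 <= a by apply: ln_ge0.
have b0 : 0 <= b by apply: ln_ge0.
have eM : INR m = exp a by rewrite /a exp_ln //; lra.
have eN : INR n = exp b by rewrite /b exp_ln //; lra.
set A1 := s - INR t * INR ((l.-1)./2) in hal.
set A2 := s - INR t * INR (l./2) - 2 in hbe.
set L8 := ln 8; have e8 : 8 = exp L8 by rewrite /L8 exp_ln //; lra.
have L80 : 0 <= L8 by apply: ln_ge0; lra.
set x := exp ((A1 * a + A2 * b - L8) / (s - 1)).
have hs : INR (t * l)%N = s by rewrite INR_muln.
have hs1 : INR (t * l).-1 = s - 1 by rewrite INR_pred ?hs // muln_gt0 ht ltnW.
have hcond : 2 * (2 * INR n) ^ 2 * (INR n ^ (l./2) * INR m ^ ((l.-1)./2)) ^ t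
    * x ^ ((t * l).-1) <= (INR m * INR n) ^ (t * l).
  apply: Req_le; rewrite (_ : 2 * (2 * INR n) ^ 2 = 8 * INR n ^ 2); last by ring.
  rewrite e8 eM eN /x -!exp_plus !pow_exp -!exp_plus pow_exp -!exp_plus.
  by congr exp; rewrite hs1 hs /A1 /A2; change (INR 2) with 2; field; lra.
have hz := z_theta_ge_min hm ht hl hmn (Rlt_le _ _ (exp_pos _)) hcond.
rewrite -/x in hz.
have below_x : exp (al * a + be * b) <= 8 * x.
  rewrite e8 /x -exp_plus; apply: exp_le.
  apply: (Rmult_le_reg_r (s - 1)); first lra.
  rewrite (_ : (L8 + (A1 * a + A2 * b - L8) / (s - 1)) * (s - 1)
             = L8 * (s - 1) + A1 * a + A2 * b - L8); last by field; lra.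
  have := Rmult_le_compat_r a _ _ a0 hal; have := Rmult_le_compat_r b _ _ b0 hbe.
  nra.
have below_mn : exp (al * a + be * b) <= 8 * (INR m * INR n).
  by rewrite e8 eM eN -!exp_plus; apply: exp_le; nra.
rewrite /Rpower -/a -/b Rmult_assoc -exp_plus.
suff : exp (al * a + be * b) <= 8 * Rmin x (INR m * INR n) by lra.
by rewrite /Rmin; case: Rle_dec.
Qed.

Lemma odd_exponents_ok (eps T H L : R) :
  0 < eps -> 1 <= T -> 2 < T * eps -> 1 <= H -> L = 2 * H + 1 ->
  (L + 1) / (2 * L) - eps <= 1 /\
  ((L + 1) / (2 * L) - eps) * (T * L - 1) <= T * L - T * H - 2.
Proof.
move=> heps hT hTe hH ->.
have -> : (2 * H + 1 + 1) / (2 * (2 * H + 1)) = (H + 1) / (2 * H + 1).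
  by field; lra.
have q1 : (H + 1) / (2 * H + 1) <= 1.
  rewrite (_ : (H + 1) / (2 * H + 1) = 1 - H * / (2 * H + 1)); last by field; lra.
  have : 0 < / (2 * H + 1) by apply: Rinv_0_lt_compat; lra.
  nra.
have q0 : 0 <= (H + 1) / (2 * H + 1) by apply: Rlt_le; apply: Rdiv_lt_0_compat; lra.
have qTL : (H + 1) / (2 * H + 1) * (T * (2 * H + 1)) = T * (H + 1) by field; lra.
split; first lra.
rewrite Rmult_minus_distr_l Rmult_minus_distr_r qTL.
have : 2 * T * eps <= eps * (T * (2 * H + 1) - 1) by nra.
lra.
Qed.

Lemma even_exponents_ok (eps T H L : R) :
  0 < eps -> 1 <= T -> 2 < T * eps -> 1 <= H -> L = 2 * H ->
  [/\ 1 / 2 + 1 / L - eps <= 1, 1 / 2 - eps <= 1,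
      (1 / 2 + 1 / L - eps) * (T * L - 1) <= T * L - T * (H - 1) &
      (1 / 2 - eps) * (T * L - 1) <= T * L - T * H - 2].
Proof.
move=> heps hT hTe hH ->.
have r1 : 1 / (2 * H) <= 1 / 2.
  rewrite (_ : 1 / (2 * H) = / 2 * / H); last by field; lra.
  have : / H <= 1 by rewrite -Rinv_1; apply: Rinv_le_contravar; lra.
  lra.
have r0 : 0 <= 1 / (2 * H) by apply: Rlt_le; apply: Rdiv_lt_0_compat; lra.
have rTL : 1 / (2 * H) * (T * (2 * H)) = T by field; lra.
have e1 : T * eps <= eps * (T * (2 * H) - 1) by nra.
by split; lra.
Qed.

Lemma odd_halves l : odd l -> (1 < l)%N ->
  [/\ (l.-1)./2 = l./2, (1 <= l./2)%N & INR l = 2 * INR l./2 + 1].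
Proof.
move=> hodd hl; have := odd_double_half l; rewrite hodd add1n.
set h := l./2 => hdh; split.
- by rewrite -hdh /= doubleK.
- by move: hl; rewrite -hdh ltnS double_gt0.
- by rewrite -hdh S_INR -mul2n INR_muln; change (INR 2) with 2.
Qed.

Lemma even_halves l : ~~ odd l -> (1 < l)%N ->
  [/\ (l.-1)./2 = (l./2).-1, (1 <= l./2)%N & INR l = 2 * INR l./2].
Proof.
move=> hev hl; have := odd_double_half l; rewrite (negbTE hev) add0n.
set h := l./2 => hdh.
have h1 : (1 <= h)%N by move: hl; rewrite -hdh -mul2n; lia.
split=> //.
- by rewrite -hdh; case: h h1 {hdh} => // h _; rewrite doubleS /= uphalf_double.
- by rewrite -hdh -mul2n INR_muln; change (INR 2) with 2.
Qed.

Lemma exists_nat_gt x : exists k : nat, x < INR k.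
Proof.
have [hx _] := archimed x; exists (Z.to_nat (up x)).
have : (up x <= Z.of_nat (Z.to_nat (up x)))%Z by lia.
by move/IZR_le; rewrite -INR_IZR_INZ; lra.
Qed.

Theorem mainTheorem9 (eps : R) (l : nat) :
  0 < eps -> (2 <= l)%N ->
  exists t0 : nat, forall t : nat, (t0 <= t)%N ->
    exists c : R, 0 < c /\
      forall m n : nat, (0 < m)%N -> (m <= n)%N ->
        if odd l then
          c * Rpower (INR m) ((INR l + 1) / (2 * INR l) - eps)
            * Rpower (INR n) ((INR l + 1) / (2 * INR l) - eps)
          <= INR (z_theta m n t l)
        else
          c * Rpower (INR m) (1 / 2 + 1 / INR l - eps)
            * Rpower (INR n) (1 / 2 - eps)
          <= INR (z_theta m n t l).
Proof.
move=> heps hl.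
have [t0 ht0] := exists_nat_gt (2 / eps).
exists t0 => t ht0t.
have tR : 2 / eps < INR t := Rlt_le_trans _ _ _ ht0 (INR_leR ht0t).
have teps : 2 < INR t * eps.
  have := Rmult_lt_compat_r eps _ _ heps tR.
  by rewrite /Rdiv Rmult_assoc Rinv_l; lra.
have ht : (0 < t)%N.
  apply/ltP/INR_lt; have : 0 < 2 / eps by apply: Rdiv_lt_0_compat; lra.
  by simpl; lra.
have t1 : 1 <= INR t := INR_leR ht.
exists (/ 32); split; first lra.
move=> m n hm hmn; case: ifP => hodd.
- have [hp h1 hL] := odd_halves hodd hl.
  have [a1 ha] := odd_exponents_ok heps t1 teps (INR_leR h1) hL.
  by apply: z_theta_power_lower => //; rewrite ?hp; lra.
- have [hp h1 hL] := even_halves (negbT hodd) hl.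
  have [a1 b1 ha hb] := even_exponents_ok heps t1 teps (INR_leR h1) hL.
  by apply: z_theta_power_lower => //; rewrite ?hp ?(INR_pred h1); lra.
Qed.
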